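(* Let $\delta>0$, $\rho>0$ and $\eta_c>0$, and let $g(A,\eta)=\delta(\eta-\eta_c)$ and $h(A,\eta)=\rho\left(112.88+56.91\eta-24.31\eta^2-11.05\eta^3-\frac{A}{1.5}\right)$. Consider the piecewise vector field $$\dot A=g(A,\eta),\qquad \dot\eta=\begin{cases} -|h| & \eta>1,\\ \tfrac{h-|h|}{2} & \eta=1,\\ h & 0<\eta<1,\\ \tfrac{h+|h|}{2} & \eta=0,\\ |h| & \eta<0. \end{cases}$$ Then any (forward-unique) Filippov solution $(A(t),\eta(t))$ of this system that reaches the boundary $\eta=0$, say $\eta(t_0)=0$, leaves it in finite time: there exists $t_1>t_0$ with $\eta(t_1)>0$.
   Context: Filippov solutions: for a locally essentially bounded vector field $F$ on $\mathbb{R}^2$, let $\mathcal{K}[F](z)=\bigcap_{\delta'>0}\bigcap_{\mu(N)=0}\overline{\mathrm{co}}\,F(B_{\delta'}(z)\setminus N)$; a Filippov solution is an absolutely continuous curve $z(t)$ with $\dot z(t)\in\mathcal{K}[F](z(t))$ for almost every $t$. Such solutions exist and are unique in forward time for this system. *)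

From Stdlib Require Import Reals Lra List.
Import ListNotations.
Open Scope R_scope.

Definition pt := (R * R)%type.

Definition null1 (N : R -> Prop) : Prop :=
  forall eps, 0 < eps ->
    exists a b : nat -> R,
      (forall n, a n <= b n) /\
      (forall t, N t -> exists n, a n < t < b n) /\
      (forall n, sum_f_R0 (fun k => b k - a k) n <= eps).

Definition null2 (N : pt -> Prop) : Prop :=
  forall eps, 0 < eps ->
    exists a b c d : nat -> R,
      (forall n, a n <= b n /\ c n <= d n) /\
      (forall z, N z -> exists n, a n < fst z < b n /\ c n < snd z < d n) /\
      (forall n, sum_f_R0 (fun k => (b k - a k) * (d k - c k)) n <= eps).

Definition dist2 (z w : pt) : R :=
  sqrt ((fst z - fst w)^2 + (snd z - snd w)^2).

Definition conv_hull (S : pt -> Prop) (v : pt) : Prop :=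
  exists l : list (R * pt),
    (forall c, In c l -> 0 <= fst c /\ S (snd c)) /\
    fold_right (fun c s => fst c + s) 0 l = 1 /\
    fst v = fold_right (fun c s => fst c * fst (snd c) + s) 0 l /\
    snd v = fold_right (fun c s => fst c * snd (snd c) + s) 0 l.

Definition closure2 (S : pt -> Prop) (v : pt) : Prop :=
  forall eps, 0 < eps -> exists w, S w /\ dist2 v w < eps.

Definition img_ball_minus (F : pt -> pt) (z : pt) (dlt : R) (N : pt -> Prop)
  (v : pt) : Prop :=
  exists y, dist2 y z < dlt /\ ~ N y /\ v = F y.

Definition Filippov_K (F : pt -> pt) (z : pt) (v : pt) : Prop :=
  forall dlt, 0 < dlt -> forall N, null2 N ->
    closure2 (conv_hull (img_ball_minus F z dlt N)) v.

Fixpoint nonoverlap (lo : R) (l : list (R * R)) : Prop :=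
  match l with
  | [] => True
  | (x, y) :: l' => lo <= x <= y /\ nonoverlap y l'
  end.

Definition abs_cont_on (f : R -> R) (a b : R) : Prop :=
  forall eps, 0 < eps -> exists d, 0 < d /\
    forall l : list (R * R),
      nonoverlap a l -> (forall p, In p l -> snd p <= b) ->
      fold_right (fun p s => (snd p - fst p) + s) 0 l < d ->
      fold_right (fun p s => Rabs (f (snd p) - f (fst p)) + s) 0 l < eps.

Definition Filippov_solution (F : pt -> pt) (z : R -> pt) (a : R) : Prop :=
  (forall b, a <= b ->
     abs_cont_on (fun t => fst (z t)) a b /\
     abs_cont_on (fun t => snd (z t)) a b) /\
  exists Nt : R -> Prop, null1 Nt /\
    forall t, a < t -> ~ Nt t ->
      exists v1 v2,
        derivable_pt_lim (fun s => fst (z s)) t v1 /\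
        derivable_pt_lim (fun s => snd (z s)) t v2 /\
        Filippov_K F (z t) (v1, v2).

Definition g_fun (dlt eta_c : R) (A eta : R) : R := dlt * (eta - eta_c).

Definition h_fun (rho : R) (A eta : R) : R :=
  rho * (11288/100 + (5691/100) * eta - (2431/100) * eta^2
         - (1105/100) * eta^3 - A / (3/2)).

Definition eta_dot (rho : R) (A eta : R) : R :=
  let h := h_fun rho A eta in
  if Rlt_dec 1 eta then - Rabs h
  else if Req_EM_T eta 1 then (h - Rabs h) / 2
  else if Rlt_dec 0 eta then h
  else if Req_EM_T eta 0 then (h + Rabs h) / 2
  else Rabs h.

Definition field (dlt rho eta_c : R) (z : pt) : pt :=
  (g_fun dlt eta_c (fst z) (snd z), eta_dot rho (fst z) (snd z)).

(* Suppose eta stayed <= 0 after t0.  Then eta is nondecreasing there: where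
   eta < 0 the field gives eta' = |h| >= 0, and where eta = 0 the point is a
   maximum.  Being continuous with eta t0 = 0, it vanishes on (t0, +oo).  Then
   A' = - dlt eta_c, so A eventually becomes negative; but near a point (A, 0)
   with A < 1 the eta-component of the field is h >= 19 rho, so every Filippov
   velocity there has eta' >= 19 rho > 0, contradicting eta = 0.
   Both monotonicity steps rest on the fact that an absolutely continuous
   function whose derivative is >= m off a null set grows at rate >= m, proved
   by sweeping the interval from the left. *)

From Stdlib Require Import Reals Lra List Classical Lia.
Import ListNotations.
Open Scope R_scope.

Definition lsum {X : Type} (u : X -> R) (l : list X) : R :=
  fold_right (fun x s => u x + s) 0 l.

Lemma lsum_app {X : Type} (u : X -> R) l1 l2 :
  lsum u (l1 ++ l2) = lsum u l1 + lsum u l2.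
Proof. induction l1 as [|x l1 IH]; unfold lsum in *; simpl; [lra|]. rewrite IH; lra. Qed.

Lemma lsum_add {X : Type} (u w : X -> R) l :
  lsum (fun x => u x + w x) l = lsum u l + lsum w l.
Proof. induction l as [|x l IH]; unfold lsum in *; simpl; [lra|]. rewrite IH; lra. Qed.

Lemma lsum_scal {X : Type} (k : R) (u : X -> R) l :
  lsum (fun x => k * u x) l = k * lsum u l.
Proof. induction l as [|x l IH]; unfold lsum in *; simpl; [lra|]. rewrite IH; lra. Qed.

Lemma lsum_map {X Y : Type} (u : Y -> R) (h : X -> Y) l :
  lsum u (map h l) = lsum (fun x => u (h x)) l.
Proof. induction l as [|x l IH]; unfold lsum in *; simpl; [lra|]. rewrite IH; lra. Qed.

Lemma lsum_le {X : Type} (u w : X -> R) l :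
  (forall x, In x l -> u x <= w x) -> lsum u l <= lsum w l.
Proof.
  induction l as [|x l IH]; intros Huw; unfold lsum in *; simpl; [lra|].
  pose proof (Huw x (or_introl eq_refl)).
  assert (fold_right (fun x s => u x + s) 0 l <= fold_right (fun x s => w x + s) 0 l)
    by (apply IH; intros y Hy; apply Huw; right; exact Hy).
  lra.
Qed.

Section NonnegativeSums.

Variable u : nat -> R.
Hypothesis u_ge0 : forall n, 0 <= u n.

Lemma lsum_le_filter_out (M : nat) l : NoDup l ->
  lsum u l <= u M + lsum u (filter (fun k => negb (Nat.eqb k M)) l).
Proof.
  induction l as [|x l IH]; intros Hnd; unfold lsum in *; simpl; [specialize (u_ge0 M); lra|].
  inversion Hnd as [|? ? Hx Hl]; subst.
  destruct (Nat.eqb_spec x M) as [->|Hne]; simpl.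
  - rewrite forallb_filter_id; [lra|].
    apply forallb_forall. intros k Hk.
    destruct (Nat.eqb_spec k M); subst; [contradiction | reflexivity].
  - specialize (IH Hl). lra.
Qed.

Lemma lsum_NoDup_le_sum_f_R0 l : NoDup l -> exists M, lsum u l <= sum_f_R0 u M.
Proof.
  assert (Hgen : forall M l, NoDup l -> (forall n, In n l -> (n <= M)%nat) ->
            lsum u l <= sum_f_R0 u M).
  { induction M as [|M IH]; intros l' Hnd Hbd.
    - eapply Rle_trans; [apply (lsum_le_filter_out 0 _ Hnd)|].
      destruct (filter (fun k => negb (Nat.eqb k 0)) l') as [|k r] eqn:E; [simpl; lra|].
      assert (Hk : In k (filter (fun k => negb (Nat.eqb k 0)) l')) by (rewrite E; left; reflexivity).
      apply filter_In in Hk as [Hk Hk0]. specialize (Hbd k Hk).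
      destruct (Nat.eqb_spec k 0); [discriminate|lia].
    - eapply Rle_trans; [apply (lsum_le_filter_out (S M) _ Hnd)|]. simpl.
      enough (lsum u (filter (fun k => negb (Nat.eqb k (S M))) l') <= sum_f_R0 u M) by lra.
      apply IH; [apply NoDup_filter, Hnd|].
      intros k Hk. apply filter_In in Hk as [Hk HkM]. specialize (Hbd k Hk).
      destruct (Nat.eqb_spec k (S M)); [discriminate|lia]. }
  intros Hnd. exists (list_max l). apply Hgen; [exact Hnd|].
  intros n Hn. pose proof (proj1 (list_max_le l (list_max l)) (le_n _)) as Hall.
  rewrite Forall_forall in Hall. exact (Hall n Hn).
Qed.

End NonnegativeSums.

Lemma nonoverlap_snoc lo l x y : nonoverlap lo l -> lo <= x ->
  (forall p, In p l -> snd p <= x) -> x <= y -> nonoverlap lo (l ++ [(x, y)]).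
Proof.
  revert lo. induction l as [|[x0 y0] l IH]; intros lo Hl Hlo Hend Hxy; simpl in *; [tauto|].
  destruct Hl as [H0 Hl]. split; [exact H0|]. apply IH; auto.
  specialize (Hend (x0, y0) (or_introl eq_refl)); simpl in Hend; lra.
Qed.

Lemma nonoverlap_le lo' lo l : lo' <= lo -> nonoverlap lo l -> nonoverlap lo' l.
Proof. destruct l as [|[x y] l]; simpl; [auto|]. intros H [H1 H2]; split; [lra|exact H2]. Qed.

Lemma abs_cont_on_le_left f lo c d : lo <= c -> abs_cont_on f lo d -> abs_cont_on f c d.
Proof.
  intros Hlo Hf eps Heps. destruct (Hf eps Heps) as [del [Hdel Hl]].
  exists del; split; [exact Hdel|]. intros l Hno. apply Hl. exact (nonoverlap_le _ _ _ Hlo Hno).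
Qed.

Lemma abs_cont_on_const k lo hi : abs_cont_on (fun _ => k) lo hi.
Proof.
  intros eps Heps. exists 1; split; [lra|]. intros l _ _ _.
  enough (fold_right (fun p s => Rabs (k - k) + s) 0 l = 0) as -> by exact Heps.
  induction l as [|p l IH]; simpl; [reflexivity|].
  rewrite IH. replace (k - k) with 0 by ring. rewrite Rabs_R0; ring.
Qed.

Lemma abs_cont_on_opp f lo hi : abs_cont_on f lo hi -> abs_cont_on (fun t => - f t) lo hi.
Proof.
  intros Hf eps Heps. destruct (Hf eps Heps) as [del [Hdel Hl]].
  exists del; split; [exact Hdel|]. intros l H1 H2 H3.
  enough (fold_right (fun p s => Rabs (- f (snd p) - - f (fst p)) + s) 0 l =
          fold_right (fun p s => Rabs (f (snd p) - f (fst p)) + s) 0 l) as ->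
    by exact (Hl l H1 H2 H3).
  clear. induction l as [|p l IH]; simpl; [reflexivity|]. rewrite IH.
  replace (- f (snd p) - - f (fst p)) with (- (f (snd p) - f (fst p))) by ring.
  rewrite Rabs_Ropp; reflexivity.
Qed.

Lemma derivable_pt_lim_pos_locally_increasing f x v :
  derivable_pt_lim f x v -> 0 < v ->
  exists r, 0 < r /\ forall y, Rabs (y - x) < r ->
    (x < y -> f x < f y) /\ (y < x -> f y < f x).
Proof.
  intros Hf Hv. destruct (Hf v Hv) as [r Hr]. exists r; split; [apply cond_pos|].
  intros y Hy.
  assert (Hq : y <> x -> 0 < (f y - f x) / (y - x)).
  { intros Hne. specialize (Hr (y - x) ltac:(lra) Hy).
    replace (x + (y - x)) with y in Hr by ring. apply Rabs_def2 in Hr. lra. }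
  split; intros Hxy; specialize (Hq ltac:(lra));
    assert (f y - f x = (f y - f x) / (y - x) * (y - x)) by (field; lra); nra.
Qed.

Lemma derivable_pt_lim_local_max f t v r : derivable_pt_lim f t v -> 0 < r ->
  (forall y, Rabs (y - t) < r -> f y <= f t) -> v = 0.
Proof.
  intros Hf Hr Hmax.
  destruct (Rtotal_order v 0) as [Hv|[Hv|Hv]]; [exfalso| exact Hv| exfalso].
  - destruct (derivable_pt_lim_pos_locally_increasing (- f)%F t (- v)
      (derivable_pt_lim_opp _ _ _ Hf) ltac:(lra)) as [r' [Hr' Hinc]].
    set (y := t - Rmin r r' / 2).
    assert (0 < Rmin r r') by (apply Rmin_glb_lt; lra).
    assert (Hy : Rabs (y - t) = Rmin r r' / 2) by (unfold y; rewrite Rabs_left; lra).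
    pose proof (Rmin_l r r'). pose proof (Rmin_r r r').
    assert (Hlt : (- f)%F y < (- f)%F t) by (apply Hinc; [rewrite Hy|unfold y]; lra).
    unfold opp_fct in Hlt. specialize (Hmax y ltac:(rewrite Hy; lra)). lra.
  - destruct (derivable_pt_lim_pos_locally_increasing f t v Hf Hv) as [r' [Hr' Hinc]].
    set (y := t + Rmin r r' / 2).
    assert (0 < Rmin r r') by (apply Rmin_glb_lt; lra).
    assert (Hy : Rabs (y - t) = Rmin r r' / 2) by (unfold y; rewrite Rabs_right; lra).
    pose proof (Rmin_l r r'). pose proof (Rmin_r r r').
    assert (Hlt : f t < f y) by (apply Hinc; [rewrite Hy|unfold y]; lra).
    specialize (Hmax y ltac:(rewrite Hy; lra)). lra.
Qed.

Section IncrementBound.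

Variables (f : R -> R) (m c d : R) (N : R -> Prop).
Hypothesis c_le_d : c <= d.
Hypothesis f_deriv_ge : forall t, c <= t <= d -> ~ N t ->
  exists v, derivable_pt_lim f t v /\ m <= v.

Section Sweep.

Variables (eps : R) (a b : nat -> R).
Hypothesis eps_gt0 : 0 < eps.
Hypothesis N_covered : forall t, N t -> exists n, a n < t < b n.

Definition tilt (x : R) : R := f x + (eps - m) * x.

Definition jump_cost (p : R * R) : R :=
  Rabs (f (snd p) - f (fst p)) + Rabs m * (snd p - fst p).

(* The intervals [(s, e)] crossed so far, each tagged with the index [n] of the
   covering interval [(a n, b n)] of [N] it was cut from.  Ending each one at
   [Rmin (b n) d] makes the indices distinct, so their total length is bounded
   by the total length of the cover. *)
Definition cover_chain (l : list ((R * R) * nat)) (x : R) : Prop :=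
  (forall s e n, In ((s, e), n) l -> a n < s /\ e = Rmin (b n) d) /\
  nonoverlap c (map fst l) /\
  (forall p, In p (map fst l) -> snd p <= x) /\
  NoDup (map snd l).

(* Sweep [c, d] from the left.  Outside [N] the tilted function, whose
   derivative is at least [eps], increases; across a covering interval of [N]
   it may decrease, but only by the jump cost of that interval. *)
Definition reached (x : R) : Prop :=
  c <= x <= d /\
  exists l, cover_chain l x /\ tilt c - tilt x <= lsum jump_cost (map fst l).

Lemma reached_left : reached c.
Proof.
  split; [lra|]. exists []. repeat split; simpl; try tauto; [constructor|].
  unfold lsum; simpl; lra.
Qed.

Lemma reached_climb x y : reached x -> x <= y <= d -> tilt x <= tilt y -> reached y.
Proof.
  intros [Hx [l [[Hj [Hno [Hend Hnd]]] Hcost]]] Hxy Htilt.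
  split; [lra|]. exists l. split; [|lra].
  split; [exact Hj|split; [exact Hno|split; [|exact Hnd]]].
  intros p Hp. specialize (Hend p Hp). lra.
Qed.

Lemma reached_jump x n : reached x -> a n < x -> x < Rmin (b n) d ->
  reached (Rmin (b n) d).
Proof.
  intros [Hx [l [[Hj [Hno [Hend Hnd]]] Hcost]]] Hax Hxe.
  set (e := Rmin (b n) d) in *.
  assert (He : e <= d) by apply Rmin_r.
  split; [lra|]. exists (l ++ [((x, e), n)]). split; [split; [|split; [|split]]|].
  - intros s e' n' Hin. apply in_app_or in Hin as [Hin|[Hin|[]]]; [exact (Hj _ _ _ Hin)|].
    inversion Hin; subst. split; [exact Hax|reflexivity].
  - rewrite map_app. apply nonoverlap_snoc; auto; lra.
  - intros p Hp. rewrite map_app in Hp. apply in_app_or in Hp as [Hp|[<-|[]]].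
    + specialize (Hend p Hp). lra.
    + simpl. lra.
  - rewrite map_app. apply NoDup_app; [exact Hnd|repeat constructor; intros []|].
    intros k Hk [<-|[]].
    apply in_map_iff in Hk as [[[s' e'] n'] [Heq Hin]]. simpl in Heq; subst n'.
    destruct (Hj _ _ _ Hin) as [_ He'].
    assert (Hex : e' <= x) by (apply (Hend (s', e')), in_map_iff; exists ((s', e'), n); auto).
    fold e in He'. lra.
  - rewrite map_app, lsum_app. unfold lsum at 2. unfold jump_cost, tilt in *; simpl.
    pose proof (Rle_abs (- (f e - f x))) as Hf. rewrite Rabs_Ropp in Hf.
    pose proof (Rle_abs m) as Hm.
    assert (m * (e - x) <= Rabs m * (e - x)) by (apply Rmult_le_compat_r; lra).
    nra.
Qed.

Lemma reached_right : reached d.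
Proof.
  destruct (completeness reached) as [xs [Hub Hlub]].
  { exists d. intros x [Hx _]. lra. }
  { exists c. exact reached_left. }
  assert (Hxs : c <= xs <= d).
  { split; [exact (Hub c reached_left)|]. apply Hlub. intros x [Hx _]. lra. }
  assert (Happ : forall y, y < xs -> exists x, reached x /\ y < x <= xs).
  { intros y Hy. apply NNPP; intro Hno. assert (xs <= y); [|lra].
    apply Hlub. intros x Hx. apply Rnot_lt_le; intro Hyx.
    apply Hno. exists x. split; [exact Hx|]. split; [exact Hyx|exact (Hub x Hx)]. }
  destruct (classic (N xs)) as [HN|HN].
  - destruct (N_covered xs HN) as [n Hn].
    destruct (Happ (a n) (proj1 Hn)) as [x [Hx Hax]].
    destruct (Req_dec x d) as [<-|Hxd]; [exact Hx|].
    assert (Hxe : x < Rmin (b n) d) by (destruct Hx; apply Rmin_glb_lt; lra).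
    pose proof (reached_jump x n Hx ltac:(lra) Hxe) as He.
    replace d with (Rmin (b n) d); [exact He|].
    pose proof (Hub _ He). unfold Rmin in *. destruct (Rle_dec (b n) d); lra.
  - destruct (f_deriv_ge xs Hxs HN) as [v [Hv Hmv]].
    assert (Htilt : derivable_pt_lim tilt xs (v + (eps - m) * 1)).
    { apply (derivable_pt_lim_plus f (mult_real_fct (eps - m) id)); [exact Hv|].
      apply derivable_pt_lim_scal, derivable_pt_lim_id. }
    destruct (derivable_pt_lim_pos_locally_increasing _ _ _ Htilt ltac:(lra))
      as [r [Hr Hinc]].
    assert (Hreach : reached xs).
    { destruct (Happ (xs - r)) as [x [Hx Hrx]]; [lra|].
      destruct (Req_dec x xs) as [<-|Hne]; [exact Hx|].
      apply (reached_climb x); [exact Hx|lra|].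
      apply Rlt_le, Hinc; [rewrite Rabs_left|]; lra. }
    destruct (Req_dec xs d) as [<-|Hne]; [exact Hreach|exfalso].
    pose proof (Rmin_l (xs + r / 2) d). pose proof (Rmin_r (xs + r / 2) d).
    assert (xs < Rmin (xs + r / 2) d) by (apply Rmin_glb_lt; lra).
    set (y := Rmin (xs + r / 2) d) in *.
    assert (Hreach_y : reached y).
    { apply (reached_climb xs); [exact Hreach|lra|].
      apply Rlt_le, Hinc; [rewrite Rabs_right|]; lra. }
    pose proof (Hub y Hreach_y). lra.
Qed.

End Sweep.

Hypothesis f_abs_cont : abs_cont_on f c d.
Hypothesis N_null : null1 N.

Lemma abs_cont_increment_ge_approx eps : 0 < eps ->
  m * (d - c) <= f d - f c + eps * (d - c + 1 + Rabs m).
Proof.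
  intros Heps.
  destruct (f_abs_cont eps Heps) as [del [Hdel Hvar]].
  set (eta := Rmin del eps / 2).
  assert (0 < Rmin del eps) by (apply Rmin_glb_lt; lra).
  pose proof (Rmin_l del eps). pose proof (Rmin_r del eps).
  destruct (N_null eta ltac:(unfold eta; lra)) as [a [b [Hab [Hcov Hsum]]]].
  destruct (reached_right eps a b Heps Hcov) as [_ [l [[Hj [Hno [Hend Hnd]]] Hcost]]].
  assert (Hlen : lsum (fun p => snd p - fst p) (map fst l) <= eta).
  { apply Rle_trans with (lsum (fun n => b n - a n) (map snd l)).
    - rewrite !lsum_map. apply lsum_le. intros [[s e] n] Hin.
      destruct (Hj s e n Hin) as [Hs ->]. simpl. pose proof (Rmin_l (b n) d). lra.
    - destruct (lsum_NoDup_le_sum_f_R0 (fun n => b n - a n)) with (l := map snd l)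
        as [M HM]; [intros n; specialize (Hab n); lra|exact Hnd|].
      specialize (Hsum M). lra. }
  assert (Hvar' : lsum (fun p => Rabs (f (snd p) - f (fst p))) (map fst l) < eps).
  { apply Hvar; [exact Hno|exact Hend|].
    apply Rle_lt_trans with eta; [exact Hlen|unfold eta; lra]. }
  unfold jump_cost in Hcost. rewrite lsum_add, lsum_scal in Hcost. unfold tilt in Hcost.
  assert (Rabs m * lsum (fun p => snd p - fst p) (map fst l) <= Rabs m * eps)
    by (apply Rmult_le_compat_l; [apply Rabs_pos|unfold eta in Hlen; lra]).
  nra.
Qed.

Lemma abs_cont_increment_ge : m * (d - c) <= f d - f c.
Proof.
  set (K := d - c + 1 + Rabs m).
  assert (HK : 0 < K) by (unfold K; pose proof (Rabs_pos m); lra).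
  apply Rle_plus_epsilon. intros eps Heps.
  replace eps with (eps / K * K) by (field; lra).
  apply abs_cont_increment_ge_approx, Rdiv_lt_0_compat; assumption.
Qed.

End IncrementBound.

(* A set of measure zero meets no interval in full: otherwise the increment
   bound for the constant function [0] with slope [1] would hold vacuously. *)
Lemma exists_outside_null1 N p q : null1 N -> p < q -> exists t, p < t < q /\ ~ N t.
Proof.
  intros HN Hpq. apply NNPP; intro Hfull.
  set (c := (2 * p + q) / 3). set (d := (p + 2 * q) / 3).
  assert (Hcd : c <= d) by (unfold c, d; lra).
  assert (1 * (d - c) <= 0 - 0); [|unfold c, d in *; lra].
  apply (abs_cont_increment_ge (fun _ => 0) 1 c d N Hcd);
    [|apply abs_cont_on_const|exact HN].
  intros t Ht HNt. exfalso. apply Hfull. exists t. split; [unfold c, d in Ht; lra|exact HNt].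
Qed.

Lemma null2_empty : null2 (fun _ => False).
Proof.
  intros eps Heps. exists (fun _ => 0), (fun _ => 0), (fun _ => 0), (fun _ => 0).
  split; [intros; lra|]. split; [intros z []|].
  intros n. replace (sum_f_R0 _ n) with 0; [lra|].
  induction n as [|n IH]; simpl; [ring|]. rewrite <- IH. ring.
Qed.

Lemma Rabs_fst_le_dist2 y z : Rabs (fst y - fst z) <= dist2 y z.
Proof.
  unfold dist2. rewrite <- (sqrt_pow2 (Rabs _)) by apply Rabs_pos.
  apply sqrt_le_1_alt. rewrite pow2_abs. pose proof (pow2_ge_0 (snd y - snd z)). lra.
Qed.

Lemma Rabs_snd_le_dist2 y z : Rabs (snd y - snd z) <= dist2 y z.
Proof.
  unfold dist2. rewrite <- (sqrt_pow2 (Rabs _)) by apply Rabs_pos.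
  apply sqrt_le_1_alt. rewrite pow2_abs. pose proof (pow2_ge_0 (fst y - fst z)). lra.
Qed.

Lemma conv_hull_halfplane S v al be L : conv_hull S v ->
  (forall w, S w -> L <= al * fst w + be * snd w) -> L <= al * fst v + be * snd v.
Proof.
  intros [l [Hl [Hw [H1 H2]]]] HS. rewrite H1, H2, <- (Rmult_1_r L), <- Hw.
  clear Hw H1 H2. induction l as [|[w p] l IH]; simpl; [lra|].
  destruct (Hl (w, p) (or_introl eq_refl)) as [Hw0 Hp]. simpl in *.
  assert (w * L <= w * (al * fst p + be * snd p)) by (apply Rmult_le_compat_l; auto).
  assert (IH' := IH (fun c Hc => Hl c (or_intror Hc))).
  nra.
Qed.

Lemma closure2_halfplane S v al be L : closure2 S v ->
  (forall w, S w -> L <= al * fst w + be * snd w) -> L <= al * fst v + be * snd v.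
Proof.
  intros Hv HS. set (K := Rabs al + Rabs be + 1).
  assert (HK : 0 < K) by (unfold K; pose proof (Rabs_pos al); pose proof (Rabs_pos be); lra).
  apply Rle_plus_epsilon. intros eps Heps.
  destruct (Hv (eps / K) ltac:(apply Rdiv_lt_0_compat; lra)) as [w [Hw Hd]].
  specialize (HS w Hw).
  pose proof (Rabs_fst_le_dist2 v w) as D1. pose proof (Rabs_snd_le_dist2 v w) as D2.
  pose proof (Rle_abs (- (al * (fst v - fst w)))) as A1.
  pose proof (Rle_abs (- (be * (snd v - snd w)))) as A2.
  rewrite Rabs_Ropp, Rabs_mult in A1, A2.
  assert (Rabs al * Rabs (fst v - fst w) <= Rabs al * (eps / K))
    by (apply Rmult_le_compat_l; [apply Rabs_pos|lra]).
  assert (Rabs be * Rabs (snd v - snd w) <= Rabs be * (eps / K))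
    by (apply Rmult_le_compat_l; [apply Rabs_pos|lra]).
  assert ((Rabs al + Rabs be) * (eps / K) <= eps).
  { replace eps with (K * (eps / K)) at 2 by (field; lra).
    apply Rmult_le_compat_r; [apply Rlt_le, Rdiv_lt_0_compat|unfold K]; lra. }
  lra.
Qed.

Lemma Filippov_K_halfplane F z v al be L r : 0 < r -> Filippov_K F z v ->
  (forall y, dist2 y z < r -> L <= al * fst (F y) + be * snd (F y)) ->
  L <= al * fst v + be * snd v.
Proof.
  intros Hr HK HF. apply (closure2_halfplane _ _ _ _ _ (HK r Hr _ null2_empty)).
  intros w Hw. apply (conv_hull_halfplane _ _ _ _ _ Hw).
  intros p [y [Hy [_ ->]]]. exact (HF y Hy).
Qed.

Lemma Filippov_K_field_fst dlt rho eta_c z v : 0 < dlt ->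
  Filippov_K (field dlt rho eta_c) z v -> fst v = dlt * (snd z - eta_c).
Proof.
  intros Hdlt HK.
  assert (Hnear : forall eps y, 0 < eps -> dist2 y z < eps / dlt ->
            dlt * (snd z - eta_c) - eps <= fst (field dlt rho eta_c y) <=
            dlt * (snd z - eta_c) + eps).
  { intros eps y Heps Hy. simpl. unfold g_fun.
    pose proof (Rabs_def2 _ _ (Rle_lt_trans _ _ _ (Rabs_snd_le_dist2 y z) Hy)) as [H1 H2].
    assert (dlt * (eps / dlt) = eps) by (field; lra).
    split; nra. }
  apply Rle_antisym; apply Rle_plus_epsilon; intros eps Heps.
  - enough (- (dlt * (snd z - eta_c)) - eps <= -1 * fst v + 0 * snd v) by lra.
    apply (Filippov_K_halfplane _ z v (-1) 0 _ (eps / dlt)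
      ltac:(apply Rdiv_lt_0_compat; lra) HK).
    intros y Hy. specialize (Hnear eps y Heps Hy). lra.
  - enough (dlt * (snd z - eta_c) - eps <= 1 * fst v + 0 * snd v) by lra.
    apply (Filippov_K_halfplane _ z v 1 0 _ (eps / dlt)
      ltac:(apply Rdiv_lt_0_compat; lra) HK).
    intros y Hy. specialize (Hnear eps y Heps Hy). lra.
Qed.

Lemma eta_dot_of_neg rho A e : e < 0 -> eta_dot rho A e = Rabs (h_fun rho A e).
Proof.
  intros He. unfold eta_dot.
  destruct (Rlt_dec 1 e); [lra|]. destruct (Req_EM_T e 1); [lra|].
  destruct (Rlt_dec 0 e); [lra|]. destruct (Req_EM_T e 0); [lra|reflexivity].
Qed.

Lemma eta_dot_of_h_pos rho A e : -1 < e < 1 -> 0 < h_fun rho A e ->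
  eta_dot rho A e = h_fun rho A e.
Proof.
  intros He Hh. unfold eta_dot.
  destruct (Rlt_dec 1 e); [lra|]. destruct (Req_EM_T e 1); [lra|].
  destruct (Rlt_dec 0 e); [reflexivity|]. rewrite Rabs_right by lra.
  destruct (Req_EM_T e 0); lra.
Qed.

Lemma h_fun_ge rho A e : 0 < rho -> A < 1 -> -1 < e < 1 -> 19 * rho <= h_fun rho A e.
Proof.
  intros Hrho HA He. unfold h_fun.
  assert (0 <= e ^ 2 < 1) by (split; nra).
  assert (-1 < e ^ 3 < 1) by (split; nra).
  assert (A / (3 / 2) = 2 * A / 3) by field.
  nra.
Qed.

Section StuckAtBoundary.

Variables (dlt rho eta_c : R) (z : R -> pt) (a t0 : R) (Nt : R -> Prop).
Hypothesis dlt_gt0 : 0 < dlt.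
Hypothesis rho_gt0 : 0 < rho.
Hypothesis eta_c_gt0 : 0 < eta_c.
Hypothesis z_abs_cont : forall b, a <= b ->
  abs_cont_on (fun t => fst (z t)) a b /\ abs_cont_on (fun t => snd (z t)) a b.
Hypothesis Nt_null : null1 Nt.
Hypothesis z_deriv : forall t, a < t -> ~ Nt t ->
  exists v1 v2,
    derivable_pt_lim (fun s => fst (z s)) t v1 /\
    derivable_pt_lim (fun s => snd (z s)) t v2 /\
    Filippov_K (field dlt rho eta_c) (z t) (v1, v2).
Hypothesis a_le_t0 : a <= t0.
Hypothesis eta_t0 : snd (z t0) = 0.
Hypothesis eta_nonpos : forall t, t0 < t -> snd (z t) <= 0.

Lemma eta_deriv_ge0 t : t0 < t -> ~ Nt t ->
  exists v, derivable_pt_lim (fun s => snd (z s)) t v /\ 0 <= v.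
Proof.
  intros Ht HNt. destruct (z_deriv t ltac:(lra) HNt) as [v1 [v2 [_ [Hv2 HK]]]].
  exists v2. split; [exact Hv2|].
  destruct (Req_dec (snd (z t)) 0) as [H0|H0].
  - apply Req_le_sym, (derivable_pt_lim_local_max _ t v2 (t - t0) Hv2); [lra|].
    intros y Hy. rewrite H0. apply eta_nonpos. apply Rabs_def2 in Hy. lra.
  - assert (Hneg : snd (z t) < 0) by (specialize (eta_nonpos t Ht); lra).
    enough (0 <= 0 * v1 + 1 * v2) by lra.
    apply (Filippov_K_halfplane _ (z t) (v1, v2) 0 1 0 (- snd (z t)) ltac:(lra) HK).
    intros y Hy. simpl. rewrite eta_dot_of_neg.
    + pose proof (Rabs_pos (h_fun rho (fst y) (snd y))). lra.
    + pose proof (Rle_lt_trans _ _ _ (Rabs_snd_le_dist2 y (z t)) Hy) as Hyz.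
      apply Rabs_def2 in Hyz. lra.
Qed.

Lemma eta_nondecreasing c d : t0 < c -> c <= d -> snd (z c) <= snd (z d).
Proof.
  intros Hc Hcd.
  enough (0 * (d - c) <= snd (z d) - snd (z c)) by lra.
  apply (abs_cont_increment_ge (fun s => snd (z s)) 0 c d Nt Hcd); [| |exact Nt_null].
  - intros t Ht HNt. apply eta_deriv_ge0; [lra|exact HNt].
  - apply (abs_cont_on_le_left _ a); [lra|]. apply z_abs_cont. lra.
Qed.

Lemma eta_vanishes t : t0 < t -> snd (z t) = 0.
Proof.
  intros Ht. apply Rle_antisym; [exact (eta_nonpos t Ht)|].
  apply Rnot_lt_le; intro Hneg.
  destruct (proj2 (z_abs_cont t ltac:(lra)) (- snd (z t)) ltac:(lra)) as [del [Hdel Hvar]].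
  pose proof (Rmin_l del (t - t0)). pose proof (Rmin_r del (t - t0)).
  assert (0 < Rmin del (t - t0)) by (apply Rmin_glb_lt; lra).
  set (c := t0 + Rmin del (t - t0) / 2).
  specialize (Hvar [(t0, c)]). simpl in Hvar.
  assert (Hjump : Rabs (snd (z c) - snd (z t0)) + 0 < - snd (z t)).
  { apply Hvar; [unfold c; lra|intros p [<-|[]]; simpl; unfold c; lra|unfold c; lra]. }
  rewrite eta_t0 in Hjump. pose proof (Rle_abs (- (snd (z c) - 0))) as Habs.
  rewrite Rabs_Ropp in Habs.
  pose proof (eta_nondecreasing c t ltac:(unfold c; lra) ltac:(unfold c; lra)). lra.
Qed.

Lemma A_decrease c d : t0 < c -> c <= d ->
  dlt * eta_c * (d - c) <= fst (z c) - fst (z d).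
Proof.
  intros Hc Hcd.
  enough (dlt * eta_c * (d - c) <= - fst (z d) - - fst (z c)) by lra.
  apply (abs_cont_increment_ge (fun s => - fst (z s)) _ c d Nt Hcd); [| |exact Nt_null].
  - intros t Ht HNt. destruct (z_deriv t ltac:(lra) HNt) as [v1 [v2 [Hv1 [_ HK]]]].
    exists (- v1). split; [exact (derivable_pt_lim_opp _ _ _ Hv1)|].
    pose proof (Filippov_K_field_fst _ _ _ _ _ dlt_gt0 HK) as Hv. simpl in Hv.
    rewrite eta_vanishes in Hv by lra. lra.
  - apply (abs_cont_on_le_left _ a); [lra|]. apply abs_cont_on_opp, z_abs_cont. lra.
Qed.

Lemma exists_A_neg : exists t, t0 < t /\ ~ Nt t /\ fst (z t) < 0.
Proof.
  set (k := dlt * eta_c). assert (Hk : 0 < k) by (unfold k; nra).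
  set (T := t0 + 1 + (Rabs (fst (z (t0 + 1))) + 1) / k).
  assert (HT : 0 < (Rabs (fst (z (t0 + 1))) + 1) / k)
    by (apply Rdiv_lt_0_compat; [pose proof (Rabs_pos (fst (z (t0 + 1)))); lra|exact Hk]).
  destruct (exists_outside_null1 Nt T (T + 1) Nt_null ltac:(lra)) as [t [Ht HNt]].
  exists t. split; [unfold T in Ht; lra|split; [exact HNt|]].
  pose proof (A_decrease (t0 + 1) t ltac:(lra) ltac:(unfold T in Ht; lra)) as Hdec.
  fold k in Hdec.
  assert (k * ((Rabs (fst (z (t0 + 1))) + 1) / k) = Rabs (fst (z (t0 + 1))) + 1)
    by (field; lra).
  assert (k * ((Rabs (fst (z (t0 + 1))) + 1) / k) < k * (t - (t0 + 1)))
    by (apply Rmult_lt_compat_l; [exact Hk|unfold T in Ht; lra]).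
  pose proof (Rle_abs (fst (z (t0 + 1)))). lra.
Qed.

Lemma eta_stuck_absurd : False.
Proof.
  destruct exists_A_neg as [t [Ht [HNt HA]]].
  destruct (z_deriv t ltac:(lra) HNt) as [v1 [v2 [_ [Hv2 HK]]]].
  assert (Hv0 : v2 = 0).
  { apply (derivable_pt_lim_local_max _ t v2 (t - t0) Hv2); [lra|].
    intros y Hy. apply Rabs_def2 in Hy. rewrite !eta_vanishes by lra. lra. }
  enough (19 * rho <= 0 * v1 + 1 * v2) by lra.
  apply (Filippov_K_halfplane _ (z t) (v1, v2) 0 1 _ 1 ltac:(lra) HK).
  intros y Hy. simpl.
  pose proof (Rabs_def2 _ _ (Rle_lt_trans _ _ _ (Rabs_fst_le_dist2 y (z t)) Hy)).
  pose proof (Rabs_def2 _ _ (Rle_lt_trans _ _ _ (Rabs_snd_le_dist2 y (z t)) Hy)).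
  rewrite (eta_vanishes t Ht) in *.
  assert (Hh : 19 * rho <= h_fun rho (fst y) (snd y)) by (apply h_fun_ge; lra).
  rewrite eta_dot_of_h_pos; lra.
Qed.

End StuckAtBoundary.

Theorem theorem3p3 (dlt rho eta_c : R) (z : R -> R * R) (a t0 : R) :
  0 < dlt -> 0 < rho -> 0 < eta_c ->
  Filippov_solution (field dlt rho eta_c) z a ->
  a <= t0 ->
  snd (z t0) = 0 ->
  exists t1, t0 < t1 /\ 0 < snd (z t1).
Proof.
  intros Hdlt Hrho Heta_c [Hac [Nt [HNt Hder]]] Hat0 Hz0.
  apply NNPP; intro Hstuck.
  apply (eta_stuck_absurd dlt rho eta_c z a t0 Nt); auto.
  intros t Ht. apply Rnot_lt_le; intro Hpos. apply Hstuck. exists t; auto.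
Qed.
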